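(* A family of structures $\mathfrak{K}=\{\mathcal{A}_i:i\in\mathbb{N}\}$ is $\mathbf{Fin}$-learnable if and only if it is $=_{\mathbb{N}}$-learnable.
   Context: All structures are countable, have domain $\mathbb{N}$, are in a finite relational signature, and are identified with their atomic diagrams (elements of $2^{\mathbb{N}}$ via a fixed Gödel numbering). A family of structures $\mathfrak{K}$ is a countable set of pairwise nonisomorphic such structures. For a structure $\mathcal{S}$ and $s\in\mathbb{N}$, $\mathcal{S}\restriction_s$ denotes the finite substructure with domain $\{0,\dots,s\}$. The learning domain $\mathrm{LD}(\mathfrak{K})\subseteq 2^{\mathbb{N}}$ is the set of all structures with domain $\mathbb{N}$ isomorphic to some member of $\mathfrak{K}$, with the subspace topology of Cantor space. The hypothesis space is $\{\ulcorner\mathcal{A}\urcorner:\mathcal{A}\in\mathfrak{K}\}\cup\{?\}$ (pairwise distinct formal symbols). A learner is an arbitrary function $\mathbf{M}$ from $\{\mathcal{S}\restriction_s:\mathcal{S}\in\mathrm{LD}(\mathfrak{K}),s\in\mathbb{N}\}$ to the hypothesis space. $\mathfrak{K}$ is $\mathbf{Fin}$-learnable if there is a learner $\mathbf{M}$ such that for every $\mathcal{S}\in\mathrm{LD}(\mathfrak{K})$ there is $s_0$ with $\mathbf{M}(\mathcal{S}\restriction_t)=?$ for all $t<s_0$ and $\mathbf{M}(\mathcal{S}\restriction_t)=\ulcorner\mathcal{A}\urcorner$ for all $t\geq s_0$, where $\mathcal{A}\in\mathfrak{K}$ is isomorphic to $\mathcal{S}$. For an equivalence relation $E$ on a space $X$,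 $\mathfrak{K}$ is $E$-learnable if there is a continuous function $\Gamma:\mathrm{LD}(\mathfrak{K})\to X$ such that for all $\mathcal{S},\mathcal{S}'\in\mathrm{LD}(\mathfrak{K})$: $\mathcal{S}\cong\mathcal{S}'\iff\Gamma(\mathcal{S})\,E\,\Gamma(\mathcal{S}')$. Here $=_{\mathbb{N}}$ is equality on $\mathbb{N}$ with the discrete topology. *)

From mathcomp Require Import all_boot.
Set Implicit Arguments. Unset Strict Implicit. Unset Printing Implicit Defensive.

(* A finite relational signature: the list of arities of its relation symbols. *)
Definition signature := seq nat.

(* Only the "atomic facts" below are meaningful; well-formed structures are
   false on everything else, so well-formed structures correspond exactly to
   atomic diagrams (elements of 2^N via a Goedel numbering of the atoms). *)
Definition structure := nat -> seq nat -> bool.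

Definition atom (L : signature) (i : nat) (t : seq nat) : bool :=
  (i < size L) && (size t == nth 0 L i).

Definition wf (L : signature) (S : structure) : Prop :=
  forall i t, ~~ atom L i t -> S i t = false.

(* S and S' have the same finite substructure on domain {0,...,s}:
   S|s = S'|s. *)
Definition agree (L : signature) (s : nat) (S S' : structure) : Prop :=
  forall i t, atom L i t -> all (fun x => x <= s) t -> S i t = S' i t.

Definition iso (L : signature) (S S' : structure) : Prop :=
  exists f : nat -> nat, bijective f /\
    forall i t, atom L i t -> S' i (map f t) = S i t.

Definition LD (L : signature) (K : nat -> structure) (S : structure) : Prop :=
  wf L S /\ exists n, iso L (K n) S.

(* A learner: maps S|s (for S in LD) to a hypothesis; None = "?",
   Some n = the code of K n.  It is given as a function of (s, S) that
   depends only on the finite substructure S|s. *)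
Definition learner (L : signature) (K : nat -> structure)
  (M : nat -> structure -> option nat) : Prop :=
  forall s S S', LD L K S -> LD L K S' -> agree L s S S' -> M s S = M s S'.

Definition Fin_learnable (L : signature) (K : nat -> structure) : Prop :=
  exists M, learner L K M /\
    forall S, LD L K S -> exists s0,
      (forall t, t < s0 -> M t S = None) /\
      exists n, iso L (K n) S /\ (forall t, s0 <= t -> M t S = Some n).

(* Continuity of G : LD(K) -> N (N discrete, LD(K) with the subspace topology
   of Cantor space): G is locally constant on LD(K).  Since the signature is
   finite, the basic clopen neighbourhoods of S in Cantor space are exactly
   (up to refinement) the sets {S' | S'|s = S|s}. *)
Definition continuous_LD_nat (L : signature) (K : nat -> structure)
  (G : structure -> nat) : Prop :=
  forall S, LD L K S -> exists s, forall S', LD L K S' -> agree L s S S' ->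
    G S' = G S.

Definition eqN_learnable (L : signature) (K : nat -> structure) : Prop :=
  exists G : structure -> nat, continuous_LD_nat L K G /\
    forall S S', LD L K S -> LD L K S' -> (iso L S S' <-> G S = G S').

Definition is_family (L : signature) (K : nat -> structure) : Prop :=
  (forall n, wf L (K n)) /\ (forall m n, iso L (K m) (K n) -> m = n).

From mathcomp Require Import all_boot.
From Stdlib Require Import ClassicalEpsilon.
Set Implicit Arguments. Unset Strict Implicit.

(* Fin => =_N: map a structure to the index of its isomorphism type; it is
   locally constant because a Fin-learner never revises its first guess, so
   all structures sharing the finite piece at which that guess is made have the
   same index.  =_N => Fin: output the index of S as soon as the current finite
   piece of S already determines the value of the continuous reduction G on
   LD(K); since G separates isomorphism types, that answer is correct, and by
   continuity such a stage exists. *)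

Lemma atom_map L i t (f : nat -> nat) : atom L i (map f t) = atom L i t.
Proof. by rewrite /atom size_map. Qed.

Lemma iso_sym L S S' : iso L S S' -> iso L S' S.
Proof.
move=> [f [[g fK gK] fS]]; exists g; split; first by exists f.
by move=> i t At; rewrite -fS ?atom_map // (mapK gK).
Qed.

Lemma iso_trans L S1 S2 S3 : iso L S1 S2 -> iso L S2 S3 -> iso L S1 S3.
Proof.
move=> [f [bij_f fS]] [h [bij_h hS]]; exists (h \o f); split; first exact: bij_comp.
by move=> i t At; rewrite map_comp hS ?atom_map // fS.
Qed.

Lemma agree_sym L s S S' : agree L s S S' -> agree L s S' S.
Proof. by move=> ag i t At small; rewrite ag. Qed.

Lemma agree_trans L s S1 S2 S3 :
  agree L s S1 S2 -> agree L s S2 S3 -> agree L s S1 S3.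
Proof. by move=> ag12 ag23 i t At small; rewrite ag12 // ag23. Qed.

Lemma agree_le L s s' S S' : s <= s' -> agree L s' S S' -> agree L s S S'.
Proof.
move=> le_ss' ag i t At /allP small; apply: ag => //.
by apply/allP => x /small /leq_trans; apply.
Qed.

Section Learnability.
Variables (L : signature) (K : nat -> structure).

Definition iso_index (S : structure) : nat :=
  epsilon (inhabits 0) (fun n => iso L (K n) S).

Lemma iso_indexP S : LD L K S -> iso L (K (iso_index S)) S.
Proof. by move=> [_ exK]; exact: (epsilon_spec _ (fun n => iso L (K n) S)). Qed.

Hypothesis K_family : is_family L K.

Lemma iso_index_eq S n : LD L K S -> iso L (K n) S -> iso_index S = n.
Proof.
move=> LS isoS; apply: (proj2 K_family).
exact: iso_trans (iso_indexP LS) (iso_sym isoS).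
Qed.

Lemma iso_iff_iso_index_eq S S' : LD L K S -> LD L K S' ->
  iso L S S' <-> iso_index S = iso_index S'.
Proof.
move=> LS LS'; split=> [isoSS' | eq_idx].
  by symmetry; apply: iso_index_eq => //; exact: iso_trans (iso_indexP LS) isoSS'.
by apply: iso_trans (iso_sym (iso_indexP LS)) _; rewrite eq_idx; exact: iso_indexP.
Qed.

Section FinLearner.
Variable M : nat -> structure -> option nat.
Hypothesis M_learns : forall S, LD L K S -> exists s0,
  (forall t, t < s0 -> M t S = None) /\
  exists n, iso L (K n) S /\ (forall t, s0 <= t -> M t S = Some n).

Lemma fin_learner_guess_correct S t n :
  LD L K S -> M t S = Some n -> iso L (K n) S.
Proof.
move=> LS guess; have [s0 [before [n' [isoS after]]]] := M_learns LS.
have le_s0t : s0 <= t by rewrite leqNgt; apply/negP => /before; rewrite guess.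
by move: (after t le_s0t); rewrite guess => -[->].
Qed.

End FinLearner.

Lemma Fin_eqN_learnable : Fin_learnable L K -> eqN_learnable L K.
Proof.
move=> [M [M_learner M_learns]]; exists iso_index; split; last first.
  by move=> S S' LS LS'; exact: iso_iff_iso_index_eq.
move=> S LS; have [s0 [_ [n [isoS after]]]] := M_learns S LS.
exists s0 => S' LS' ag.
have guess : M s0 S' = Some n by rewrite -(M_learner s0 S S') // after.
rewrite (iso_index_eq LS isoS); apply: iso_index_eq => //.
exact: fin_learner_guess_correct guess.
Qed.

Section FromReduction.
Variable G : structure -> nat.

Definition stable s S := forall T, LD L K T -> agree L s S T -> G T = G S.

Definition stableb s S : bool :=
  if excluded_middle_informative (stable s S) then true else false.

Lemma stablebP s S : reflect (stable s S) (stableb s S).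
Proof. by rewrite /stableb; case: excluded_middle_informative; constructor. Qed.

Lemma stable_le s s' S : s <= s' -> stable s S -> stable s' S.
Proof. by move=> le_ss' stS T LT ag; apply: stS => //; exact: agree_le ag. Qed.

Lemma stable_agree s S S' : LD L K S' -> agree L s S S' -> stable s S -> stable s S'.
Proof.
move=> LS' ag stS T LT ag'.
by rewrite (stS T LT (agree_trans ag ag')) (stS S' LS' ag).
Qed.

Definition stable_learner s S : option nat :=
  if stableb s S then Some (iso_index S) else None.

Hypothesis G_continuous : continuous_LD_nat L K G.
Hypothesis G_reduction : forall S S', LD L K S -> LD L K S' ->
  (iso L S S' <-> G S = G S').

Lemma stable_learner_learner : learner L K stable_learner.
Proof.
move=> s S S' LS LS' ag; rewrite /stable_learner.
case: (stablebP s S) => [stS|nstS]; case: (stablebP s S') => [stS'|nstS'] //.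
- congr Some; apply/iso_iff_iso_index_eq => //.
  by apply/G_reduction => //; rewrite (stS S' LS' ag).
- by case: nstS'; exact: stable_agree ag stS.
- by case: nstS; exact: stable_agree (agree_sym ag) stS'.
Qed.

Lemma stable_learner_learns S : LD L K S -> exists s0,
  (forall t, t < s0 -> stable_learner t S = None) /\
  exists n, iso L (K n) S /\ (forall t, s0 <= t -> stable_learner t S = Some n).
Proof.
move=> LS; have ex_stable : exists s, stableb s S.
  by have [s stS] := G_continuous LS; exists s; apply/stablebP.
case: (ex_minnP ex_stable) => s0 /stablebP stS0 minS0.
exists s0; split.
  move=> t lt_ts0; rewrite /stable_learner.
  by case: ifP => // /minS0; rewrite leqNgt lt_ts0.
exists (iso_index S); split; first exact: iso_indexP.
move=> t le_s0t.
by rewrite /stable_learner (introT (stablebP t S) (stable_le le_s0t stS0)).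
Qed.

End FromReduction.

Lemma eqN_Fin_learnable : eqN_learnable L K -> Fin_learnable L K.
Proof.
move=> [G [G_continuous G_reduction]]; exists (stable_learner G); split.
  exact: stable_learner_learner.
exact: stable_learner_learns.
Qed.

End Learnability.

Theorem mainTheorem3 (L : signature) (K : nat -> structure) :
  is_family L K -> (Fin_learnable L K <-> eqN_learnable L K).
Proof.
by move=> K_family; split; [exact: Fin_eqN_learnable | exact: eqN_Fin_learnable].
Qed.
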